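(* Let $M$ be a Riemannian manifold with retraction $R$, and let $f:M\to\mathbb{R}$ be smooth and bounded below. Suppose there exists $L>0$ such that \[ \bigl|\mathrm{D}(f\circ R_x)(t\eta)[\eta]-\mathrm{D}(f\circ R_x)(0_x)[\eta]\bigr|\le Lt\quad\text{for all } x\in M,\ \eta\in T_xM,\ \|\eta\|_x=1,\ t\ge 0. \] Let $(x_k)$ be a sequence generated by the scaled Fletcher–Reeves conjugate gradient method described in the context (with $0<c_1<c_2<1/2$). Then \[ \liminf_{k\to\infty}\|\operatorname{grad} f(x_k)\|_{x_k}=0. \]
   Context: A retraction on $M$ is a smooth map $R:TM\to M$ with $R_x(0_x)=x$ and $\mathrm{D}R_x(0_x)=\mathrm{id}_{T_xM}$, where $R_x=R|_{T_xM}$. The differentiated retraction is $\mathcal{T}^R_{\eta}(\xi):=\mathrm{D}R_x(\eta)[\xi]\in T_{R_x(\eta)}M$ for $\eta,\xi\in T_xM$. The associated scaled vector transport is $\mathcal{T}^0_{\eta}(\xi):=\dfrac{\|\xi\|_x}{\|\mathcal{T}^R_\eta(\xi)\|_{R_x(\eta)}}\mathcal{T}^R_\eta(\xi)$. Strong Wolfe conditions for $\alpha_k>0$ at $(x_k,\eta_k)$ with constants $c_1,c_2$: $f(R_{x_k}(\alpha_k\eta_k))\le f(x_k)+c_1\alpha_k\langle \operatorname{grad} f(x_k),\eta_k\rangle_{x_k}$ and $|\langle \operatorname{grad} f(R_{x_k}(\alpha_k\eta_k)),\mathcal{T}^R_{\alpha_k\eta_k}(\eta_k)\rangle_{R_{x_k}(\alpha_k\eta_k)}|\le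 c_2|\langle \operatorname{grad} f(x_k),\eta_k\rangle_{x_k}|$. Scaled Fletcher–Reeves method: choose $x_0\in M$, set $\eta_0=-\operatorname{grad} f(x_0)$; for $k=0,1,2,\dots$: choose $\alpha_k>0$ satisfying the strong Wolfe conditions with $0<c_1<c_2<1/2$, set $x_{k+1}=R_{x_k}(\alpha_k\eta_k)$, $\beta_{k+1}=\|\operatorname{grad} f(x_{k+1})\|^2_{x_{k+1}}/\|\operatorname{grad} f(x_k)\|^2_{x_k}$, and $\eta_{k+1}=-\operatorname{grad} f(x_{k+1})+\beta_{k+1}\mathcal{T}^{(k)}_{\alpha_k\eta_k}(\eta_k)$, where $\mathcal{T}^{(k)}_{\alpha_k\eta_k}(\eta_k)=\mathcal{T}^R_{\alpha_k\eta_k}(\eta_k)$ if $\|\mathcal{T}^R_{\alpha_k\eta_k}(\eta_k)\|_{x_{k+1}}\le\|\eta_k\|_{x_k}$, and $\mathcal{T}^{(k)}_{\alpha_k\eta_k}(\eta_k)=\mathcal{T}^0_{\alpha_k\eta_k}(\eta_k)$ otherwise. (If $\operatorname{grad} f(x_{k_0})=0$ at some first index $k_0$, then $\eta_{k_0}=0$ and the iterates stay at $x_{k_0}$.) *)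

From mathcomp Require Import all_boot all_order all_algebra.
From mathcomp Require Import all_classical all_reals all_analysis.
Unset Printing Implicit Defensive.
Import Order.TTheory GRing.Theory Num.Theory.
Local Open Scope ring_scope.

Section RiemRetr.
Variable R : realType.
(* M : points; T x : tangent space T_xM (a real vector space);
   g x : Riemannian metric <.,.>_x on T_xM;
   Rt x : the retraction R_x : T_xM -> M;
   DR x eta xi : the differentiated retraction  D R_x(eta)[xi] in T_{R_x(eta)}M;
   f : the cost function; grad x : Riemannian gradient grad f(x). *)
Variables (M : Type) (T : M -> lmodType R) (g : forall x, T x -> T x -> R)
  (Rt : forall x, T x -> M) (DR : forall x (eta : T x), T x -> T (Rt x eta))
  (f : M -> R) (grad : forall x, T x).

Definition is_metric : Prop :=
  forall x, [/\ forall u v : T x, g x u v = g x v u,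
     forall (a : R) (u v w : T x), g x (a *: u + v) w = a * g x u w + g x v w
   & forall u : T x, u != 0 -> 0 < g x u u].

Definition tnorm x (v : T x) : R := Num.sqrt (g x v v).

Definition is_retraction : Prop :=
  (forall x, Rt x 0 = x) /\
  (forall x (eta : T x) (a : R) (u v : T x),
      DR x eta (a *: u + v) = a *: DR x eta u + DR x eta v).

Definition DfR x (eta xi : T x) : R :=
  derive1 (fun s : R => f (Rt x (eta + s *: xi))) 0.

(* chain rule / definition of the Riemannian gradient through the retraction:
   f o R_x is differentiable, with
   D(f o R_x)(eta)[xi] = <grad f(R_x eta), D R_x(eta)[xi]>_{R_x eta}
   and (using R_x(0)=x, D R_x(0) = id) D(f o R_x)(0)[xi] = <grad f(x), xi>_x. *)
Definition grad_chain_rule : Prop :=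
  (forall x (eta xi : T x),
     is_derive (0 : R) (1 : R) (fun s : R => f (Rt x (eta + s *: xi)))
       (g (Rt x eta) (grad (Rt x eta)) (DR x eta xi))) /\
  (forall x (xi : T x),
     is_derive (0 : R) (1 : R) (fun s : R => f (Rt x (s *: xi))) (g x (grad x) xi)).

Definition strong_wolfe (c1 c2 : R) x (eta : T x) (a : R) : Prop :=
  f (Rt x (a *: eta)) <= f x + c1 * a * g x (grad x) eta /\
  `| g (Rt x (a *: eta)) (grad (Rt x (a *: eta))) (DR x (a *: eta) eta) | <= c2 * `| g x (grad x) eta |.

Definition sfr_step x (eta : T x) (a : R) : {y : M & T y} :=
  let y := Rt x (a *: eta) in
  let tr : T y := DR x (a *: eta) eta in
  let beta := tnorm y (grad y) ^+ 2 / tnorm x (grad x) ^+ 2 in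
  let tk := if tnorm y tr <= tnorm x eta then tr
            else (tnorm x eta / tnorm y tr) *: tr in
  existT (fun y => T y) y (- grad y + beta *: tk).

End RiemRetr.

From mathcomp Require Import all_boot all_order all_algebra.
From mathcomp Require Import all_classical all_reals all_analysis.
From mathcomp Require Import ring lra.
Import Order.TTheory GRing.Theory Num.Theory.
Local Open Scope ring_scope.

(* The strong Wolfe curvature condition with [c2 < 1/2] makes every direction
   a uniform descent direction, [-<grad f(x_k), eta_k> >= d ||grad f(x_k)||^2]
   with [d = (1 - 2 c2)/(1 - c2)] (Al-Baali's argument; the scaled transport
   only ever shortens the transported direction, which is all it needs).  The
   Lipschitz condition and the curvature condition bound the step from below,
   so the Armijo condition yields the Zoutendijk decrease
   [f(x_k) - f(x_{k+1}) >= kappa <grad f(x_k), eta_k>^2 / ||eta_k||^2].  On the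
   other hand [||eta_k||^2 / ||grad f(x_k)||^4] increases by at most
   [C / ||grad f(x_{k+1})||^2] per step.  If the gradient stayed away from 0,
   the Zoutendijk terms would dominate a harmonic series, contradicting that
   [f] is bounded below. *)

Lemma limn_einf_eq0 {R : realType} (v : nat -> R) : (forall k, 0 <= v k) ->
  (forall e, 0 < e -> forall K, exists2 k, (K <= k)%N & v k <= e) ->
  limn_einf (fun k => (v k)%:E) = 0%E.
Proof.
move=> v_ge0 v_small; rewrite limn_einf_lim.
have -> : einfs (fun k => (v k)%:E) = fun=> 0%E.
  apply/funext => n; apply/eqP; rewrite eq_le; apply/andP; split.
    apply/lee_addgt0Pr => e e_gt0; rewrite add0e.
    have [k nk vk] := v_small e e_gt0 n.
    apply: (le_trans (ereal_inf_lbound _)); first by exists k.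
    by rewrite lee_fin.
  by apply: le_ereal_inf_tmp => _ [k _ <-]; rewrite lee_fin.
by rewrite lim_cst.
Qed.

Lemma harmonic_minorant_sum_unbounded {R : realType} (c : R) (a : nat -> R) :
  0 < c -> (forall j, c * harmonic j <= a j) ->
  forall B, exists n, B < \sum_(0 <= j < n) a j.
Proof.
move=> c0 ca B.
have [n hn] : exists n, B / c < series (@harmonic R) n.
  apply: contrapT => /forallNP hB; apply: (@dvg_harmonic R).
  apply: nondecreasing_is_cvgn.
    by apply: nondecreasing_series => n _ _; exact: harmonic_ge0.
  by exists (B / c) => _ [n _ <-]; rewrite leNgt; apply/negP/hB.
exists n; apply: (lt_le_trans _ (ler_sum_nat (fun j _ => ca j))).
by rewrite -mulr_sumr mulrC -ltr_pdivrMr.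
Qed.

Lemma bounded_increments_le_affine {R : numDomainType} (u : nat -> R) (d : R) :
  (forall j, u j.+1 <= u j + d) -> forall j, u j <= u 0%N + j%:R * d.
Proof.
move=> hu; elim => [|j IH]; first by rewrite mul0r addr0.
by rewrite (le_trans (hu j)) // -addn1 natrD mulrDl mul1r addrA lerD2r.
Qed.

Section SymmetricBilinear.
Context {R : pzRingType} {V : lmodType R} {b : V -> V -> R}.
Hypothesis bC : forall u v, b u v = b v u.
Hypothesis bDZl : forall a u v w, b (a *: u + v) w = a * b u w + b v w.

Lemma bilin0l w : b 0 w = 0.
Proof.
have := bDZl 1 0 0 w; rewrite scale1r addr0 mul1r => h.
by apply: (@addrI _ (b 0 w)); rewrite addr0 -h.
Qed.

Lemma bilinZl a u w : b (a *: u) w = a * b u w.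
Proof. by rewrite -[a *: u]addr0 bDZl bilin0l addr0. Qed.

Lemma bilinDl u v w : b (u + v) w = b u w + b v w.
Proof. by have := bDZl 1 u v w; rewrite scale1r mul1r. Qed.

Lemma bilinNl u w : b (- u) w = - b u w.
Proof. by rewrite -scaleN1r bilinZl mulN1r. Qed.

Lemma bilin0r w : b w 0 = 0.
Proof. by rewrite bC bilin0l. Qed.

Lemma bilinZr a u w : b w (a *: u) = a * b w u.
Proof. by rewrite bC bilinZl bC. Qed.

Lemma bilinDr u v w : b w (u + v) = b w u + b w v.
Proof. by rewrite bC bilinDl !(bC w). Qed.

Lemma bilinNr u w : b w (- u) = - b w u.
Proof. by rewrite bC bilinNl bC. Qed.

End SymmetricBilinear.

Section RiemannianRetraction.
Context {R : realType} {M : Type} {T : M -> lmodType R}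
  {g : forall x, T x -> T x -> R} {Rt : forall x, T x -> M}
  {DR : forall x (eta : T x), T x -> T (Rt x eta)}
  {f : M -> R} {grad : forall x, T x}.
Hypothesis Hmetric : is_metric R M T g.
Hypothesis Hretr : is_retraction R M T Rt DR.
Hypothesis Hgrad : grad_chain_rule R M T g Rt DR f grad.

Local Notation tn := (tnorm R M T g).
Local Notation sfr_step := (sfr_step R M T g Rt DR grad).

Lemma metric_sym x (u v : T x) : g x u v = g x v u.
Proof. by case: (Hmetric x). Qed.

Lemma metric_linl x a (u v w : T x) : g x (a *: u + v) w = a * g x u w + g x v w.
Proof. by case: (Hmetric x). Qed.

Lemma metric_gt0 x (v : T x) : v != 0 -> 0 < g x v v.
Proof. by case: (Hmetric x) => _ _; apply. Qed.

Lemma metric0l x (w : T x) : g x 0 w = 0.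
Proof. exact: bilin0l (@metric_linl x) w. Qed.

Lemma metric0r x (w : T x) : g x w 0 = 0.
Proof. exact: bilin0r (@metric_sym x) (@metric_linl x) w. Qed.

Lemma metricZl x a (u w : T x) : g x (a *: u) w = a * g x u w.
Proof. exact: bilinZl (@metric_linl x) a u w. Qed.

Lemma metricZr x a (u w : T x) : g x w (a *: u) = a * g x w u.
Proof. exact: bilinZr (@metric_sym x) (@metric_linl x) a u w. Qed.

Lemma metricDl x (u v w : T x) : g x (u + v) w = g x u w + g x v w.
Proof. exact: bilinDl (@metric_linl x) u v w. Qed.

Lemma metricDr x (u v w : T x) : g x w (u + v) = g x w u + g x w v.
Proof. exact: bilinDr (@metric_sym x) (@metric_linl x) u v w. Qed.

Lemma metricNl x (u w : T x) : g x (- u) w = - g x u w.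
Proof. exact: bilinNl (@metric_linl x) u w. Qed.

Lemma metricNr x (u w : T x) : g x w (- u) = - g x w u.
Proof. exact: bilinNr (@metric_sym x) (@metric_linl x) u w. Qed.

Lemma metric_ge0 x (v : T x) : 0 <= g x v v.
Proof.
have [->|/metric_gt0/ltW //] := eqVneq v 0.
by rewrite metric0l.
Qed.

Lemma tnorm_ge0 x (v : T x) : 0 <= tn x v.
Proof. exact: sqrtr_ge0. Qed.

Lemma tnorm0 x : tn x 0 = 0.
Proof. by rewrite /tnorm metric0l sqrtr0. Qed.

Lemma sqr_tnorm x (v : T x) : tn x v ^+ 2 = g x v v.
Proof. by rewrite sqr_sqrtr // metric_ge0. Qed.

Lemma DR0 x (eta : T x) : DR x eta 0 = 0.
Proof.
have := Hretr.2 x eta 1 0 0; rewrite !scale1r addr0 => h.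
by apply: (@addIr _ (DR x eta 0)); rewrite add0r -h.
Qed.

Lemma DR_scale x (eta : T x) a (u : T x) : DR x eta (a *: u) = a *: DR x eta u.
Proof. by have := Hretr.2 x eta a u 0; rewrite addr0 DR0 addr0. Qed.

Lemma DfR_grad x (eta xi : T x) :
  DfR R M T Rt f x eta xi = g (Rt x eta) (grad (Rt x eta)) (DR x eta xi).
Proof. by rewrite /DfR derive1E; apply: derive_val; apply: Hgrad.1. Qed.

Lemma DfR0_grad x (xi : T x) : DfR R M T Rt f x 0 xi = g x (grad x) xi.
Proof.
rewrite /DfR; under eq_fun do rewrite add0r.
by rewrite derive1E; apply: derive_val; apply: Hgrad.2.
Qed.

Lemma sfr_step_direction x (eta : T x) a :
  let y := Rt x (a *: eta) in
  let tr := DR x (a *: eta) eta in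
  let beta := g y (grad y) (grad y) / g x (grad x) (grad x) in
  exists2 tau, 0 <= tau <= 1 &
    projT2 (sfr_step x eta a) = - grad y + beta *: (tau *: tr)
    /\ tau ^+ 2 * g y tr tr <= g x eta eta.
Proof.
move=> y tr beta; rewrite /sfr_step /= -/y -/tr !sqr_tnorm -/beta.
case: ifPn => [le_tr|].
  exists 1; first by rewrite lexx ler01.
  rewrite scale1r expr1n mul1r -!sqr_tnorm; split => //.
  by rewrite lerXn2r // ?nnegrE ?tnorm_ge0.
rewrite -ltNge => lt_tr.
have tr_gt0 : 0 < tn y tr by apply: le_lt_trans lt_tr; exact: tnorm_ge0.
exists (tn x eta / tn y tr).
  by rewrite divr_ge0 ?tnorm_ge0 //= ler_pdivrMr // mul1r ltW.
split => //; rewrite -!sqr_tnorm expr_div_n divfK //.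
by rewrite expf_neq0 // gt_eqF.
Qed.

Lemma sfr_step_inner x (eta : T x) a :
  let y := Rt x (a *: eta) in
  let w := g y (grad y) (DR x (a *: eta) eta) in
  let G := g y (grad y) (grad y) in
  let beta := G / g x (grad x) (grad x) in
  let d := projT2 (sfr_step x eta a) in
  exists2 tau, 0 <= tau <= 1 &
   g y (grad y) d = - G + beta * (tau * w) /\
   g y d d <= G - 2 * beta * (tau * w) + beta ^+ 2 * g x eta eta.
Proof.
move=> y w G beta d.
have [tau tau01 [d_eq tr_le]] := sfr_step_direction x eta a.
exists tau => //; rewrite /d d_eq -/y -/G -/beta.
rewrite !(metricDl, metricDr, metricNl, metricNr, metricZl, metricZr).
rewrite (metric_sym _ (DR _ _ _) (grad y)) -/w -/G; split; first by [].
have beta2_ge0 : 0 <= beta ^+ 2 by exact: sqr_ge0.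
have := ler_wpM2l beta2_ge0 tr_le; rewrite !expr2; lra.
Qed.

Variable L : R.
Hypothesis L_gt0 : 0 < L.
Hypothesis HLip : forall x (eta : T x), tn x eta = 1 -> forall t : R, 0 <= t ->
  `| DfR R M T Rt f x (t *: eta) eta - DfR R M T Rt f x 0 eta | <= L * t.

Lemma slope_change_le x (eta : T x) a : 0 <= a ->
  `| g (Rt x (a *: eta)) (grad (Rt x (a *: eta))) (DR x (a *: eta) eta)
     - g x (grad x) eta | <= L * a * g x eta eta.
Proof.
move=> a_ge0; have [->|eta_neq0] := eqVneq eta 0.
  by rewrite DR0 !metric0r subrr normr0 mulr0.
set n := tn x eta.
have n_gt0 : 0 < n by rewrite sqrtr_gt0 metric_gt0.
pose u := n^-1 *: eta.
have eta_u : eta = n *: u by rewrite scalerA divff ?scale1r ?gt_eqF.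
have u_unit : tn x u = 1.
  rewrite /tnorm metricZl metricZr mulrA -expr2 -sqr_tnorm -/n exprVn.
  by rewrite mulVf ?sqrtr1 // sqrf_eq0 gt_eqF.
have := HLip x u u_unit _ (mulr_ge0 a_ge0 (ltW n_gt0)).
rewrite -scalerA -eta_u DfR_grad DfR0_grad => lip_u.
have -> : DR x (a *: eta) eta = n *: DR x (a *: eta) u by rewrite -DR_scale -eta_u.
have -> : g x (grad x) eta = n * g x (grad x) u by rewrite {1}eta_u metricZr.
rewrite metricZr -mulrBr normrM gtr0_norm //.
rewrite -sqr_tnorm -/n; have := ler_wpM2l (ltW n_gt0) lip_u; lra.
Qed.

Variables (c1 c2 : R).
Hypotheses (c1_gt0 : 0 < c1) (c2_ge0 : 0 <= c2) (c2_lt_half : c2 < 1 / 2).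
Variables (x0 : M) (s : nat -> {y : M & T y}) (alpha : nat -> R).
Hypothesis Hs0 : s 0%N = existT (fun y => T y) x0 (- grad x0).
Hypothesis Hpos : forall k, 0 < alpha k.
Hypothesis Hwolfe : forall k,
  strong_wolfe R M T g Rt DR f grad c1 c2 (projT1 (s k)) (projT2 (s k)) (alpha k).
Hypothesis Hstep : forall k, s k.+1 = sfr_step (projT1 (s k)) (projT2 (s k)) (alpha k).

Let X k := projT1 (s k).
Let E k : T (X k) := projT2 (s k).
Let G k := g (X k) (grad (X k)) (grad (X k)).
Let P k := g (X k) (grad (X k)) (E k).
Let N k := g (X k) (E k) (E k).
Let W k := g (Rt (X k) (alpha k *: E k)) (grad (Rt (X k) (alpha k *: E k)))
             (DR (X k) (alpha k *: E k) (E k)).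

Lemma iterate_next k : X k.+1 = Rt (X k) (alpha k *: E k).
Proof. by rewrite /X (Hstep k). Qed.

Lemma iterate_step k : exists2 tau, 0 <= tau <= 1 &
   P k.+1 = - G k.+1 + G k.+1 / G k * (tau * W k) /\
   N k.+1 <= G k.+1 - 2 * (G k.+1 / G k) * (tau * W k) + (G k.+1 / G k) ^+ 2 * N k.
Proof. by rewrite /P /N /G /X /E (Hstep k) /=; exact: sfr_step_inner. Qed.

Lemma strong_curvature k : `| W k | <= c2 * `| P k |.
Proof. exact: (Hwolfe k).2. Qed.

Lemma armijo_decrease k : f (X k.+1) <= f (X k) + c1 * alpha k * P k.
Proof. by rewrite iterate_next; exact: (Hwolfe k).1. Qed.

Lemma stationary_forever k : grad (X k) = 0 -> forall j, grad (X (k + j)%N) = 0.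
Proof.
move=> gk0 j; elim: j => [|j IH]; first by rewrite addn0.
have E0 : E (k + j)%N = 0.
  rewrite /E; move: IH; rewrite /X; case: (k + j)%N => [|i].
    by rewrite Hs0 /= => ->; rewrite oppr0.
  by rewrite (Hstep i) /= => ->; rewrite tnorm0 expr0n /= mul0r scale0r oppr0 addr0.
by rewrite addnS iterate_next E0 scaler0 Hretr.1.
Qed.

Section Nonstationary.
Hypothesis Hnz : forall k, grad (X k) != 0.

Let C := (1 + c2) / (1 - c2).
Let kappa := c1 * (1 - c2) / L.
Let delta := (1 - 2 * c2) / (1 - c2).

Lemma G_gt0 k : 0 < G k.
Proof. exact: metric_gt0. Qed.

Lemma C_ge0 : 0 <= C.
Proof. by rewrite divr_ge0 //; have := c2_ge0; have := c2_lt_half; lra. Qed.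

Lemma transport_term_le k tau : 0 <= tau <= 1 -> (1 - c2) * `|P k| <= G k ->
  (1 - c2) * `|G k.+1 / G k * (tau * W k)| <= c2 * G k.+1.
Proof.
move=> /andP[tau_ge0 tau_le1] Pk_le.
have Gk := G_gt0 k.
have beta_ge0 : 0 <= G k.+1 / G k by rewrite divr_ge0 // ltW // G_gt0.
rewrite normrM (ger0_norm beta_ge0) normrM (ger0_norm tau_ge0).
have tauW_le : tau * `|W k| <= c2 * `|P k|.
  apply: le_trans (strong_curvature k); rewrite -[leRHS]mul1r; exact: ler_wpM2r.
have tauW_le' : (1 - c2) * (tau * `|W k|) <= c2 * G k.
  apply: le_trans (ler_wpM2l c2_ge0 Pk_le); rewrite [leRHS]mulrCA.
  by apply: ler_wpM2l => //; move: c2_lt_half; lra.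
have -> : c2 * G k.+1 = G k.+1 / G k * (c2 * G k) by field; rewrite gt_eqF.
by rewrite mulrCA; apply: ler_wpM2l.
Qed.

(* Al-Baali's bounds [-1/(1-c2) <= P k / G k <= -(1-2 c2)/(1-c2)]; the lower
   one controls the transported term in the induction step. *)
Lemma sufficient_descent k :
  (1 - c2) * P k <= (2 * c2 - 1) * G k /\ (1 - c2) * `|P k| <= G k.
Proof.
elim: k => [|k [_ IH]].
  have -> : P 0%N = - G 0%N by rewrite /P /G /X /E Hs0 /= metricNr.
  rewrite normrN (ger0_norm (ltW (G_gt0 0))).
  have := G_gt0 0; have := c2_ge0; have := c2_lt_half; move=> *; split; nra.
have [tau tau01 [-> _]] := iterate_step k.
have := transport_term_le _ _ tau01 IH; set v := _ * (tau * W k) => v_le.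
have := G_gt0 k.+1; have := ler_norm v; have := lerNnormlW (lexx `|v|).
have := ler_normD (- G k.+1) v; rewrite normrN (ger0_norm (ltW (G_gt0 _))).
have := c2_ge0; have := c2_lt_half; move=> *; split; nra.
Qed.

Lemma slope_lt0 k : P k < 0.
Proof.
have [Pk_le _] := sufficient_descent k.
by have := G_gt0 k; have := c2_lt_half; nra.
Qed.

Lemma dir_sqr_gt0 k : 0 < N k.
Proof.
apply: metric_gt0; apply: contraTneq (slope_lt0 k); rewrite /P => ->.
by rewrite metric0r ltxx.
Qed.

Lemma slope_sqr_ge k : delta ^+ 2 * G k ^+ 2 <= P k ^+ 2.
Proof.
have [Pk_le _] := sufficient_descent k; have Gk := G_gt0 k.
have := c2_lt_half => c2_lt.
have delta_ge0 : 0 <= delta by rewrite divr_ge0; lra.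
have dG_ge0 : 0 <= delta * G k := mulr_ge0 delta_ge0 (ltW Gk).
have nP_ge0 : 0 <= - P k by rewrite oppr_ge0 (ltW (slope_lt0 k)).
rewrite -exprMn -[P k ^+ 2]sqrrN ler_pXn2r ?nnegrE //.
by rewrite /delta mulrAC ler_pdivrMr; lra.
Qed.

Lemma direction_ratio_step k :
  N k.+1 / G k.+1 ^+ 2 <= N k / G k ^+ 2 + C / G k.+1.
Proof.
have := c2_lt_half => c2_lt.
have [_ Pk_le] := sufficient_descent k.
have [tau tau01 [_ Nk_le]] := iterate_step k.
have Gk := G_gt0 k; have Gk' := G_gt0 k.+1.
have := transport_term_le _ _ tau01 Pk_le; rewrite -mulrA in Nk_le.
set v := _ * (tau * W k) in Nk_le * => v_le.
have := lerNnormlW (lexx `|v|) => v_ge.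
rewrite ler_pdivrMr ?exprn_gt0 //.
have -> : (N k / G k ^+ 2 + C / G k.+1) * G k.+1 ^+ 2
    = G k.+1 + 2 * (c2 * G k.+1 / (1 - c2)) + (G k.+1 / G k) ^+ 2 * N k.
  by rewrite /C; field; rewrite !gt_eqF //; lra.
have : `|v| <= c2 * G k.+1 / (1 - c2) by rewrite ler_pdivlMr; lra.
lra.
Qed.

Lemma step_size_lower_bound k : (1 - c2) * - P k <= L * alpha k * N k.
Proof.
have := slope_change_le _ (E k) _ (ltW (Hpos k)); rewrite -/(W k) -/(P k) -/(N k).
have := strong_curvature k; rewrite (ltr0_norm (slope_lt0 k)).
have := ler_norm (W k - P k); have := lerNnormlW (lexx `|W k|); lra.
Qed.

Lemma zoutendijk_step k : kappa * (P k ^+ 2 / N k) <= f (X k) - f (X k.+1).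
Proof.
have Pk := slope_lt0 k; have Nk := dir_sqr_gt0 k.
have alpha_ge : (1 - c2) * - P k / (L * N k) <= alpha k.
  by rewrite ler_pdivrMr ?mulr_gt0 //; have := step_size_lower_bound k; lra.
have -> : kappa * (P k ^+ 2 / N k) = c1 * - P k * ((1 - c2) * - P k / (L * N k)).
  by rewrite /kappa; field; rewrite !gt_eqF.
have cP_ge0 : 0 <= c1 * - P k by rewrite mulr_ge0 ?(ltW c1_gt0) // oppr_ge0 ltW.
by have := armijo_decrease k; have := ler_wpM2l cP_ge0 alpha_ge; lra.
Qed.

Lemma zoutendijk_sum K n :
  \sum_(0 <= j < n) kappa * (P (K + j)%N ^+ 2 / N (K + j)%N) <= f (X K) - f (X (K + n)%N).
Proof.
elim: n => [|n IH]; first by rewrite big_geq // addn0 subrr.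
by rewrite big_nat_recr //= addnS; have := zoutendijk_step (K + n); lra.
Qed.

Lemma direction_ratio_gt0 k : 0 < N k / G k ^+ 2.
Proof. by rewrite divr_gt0 ?dir_sqr_gt0 ?exprn_gt0 ?G_gt0. Qed.

Lemma direction_ratio_linear K eps : 0 < eps -> (forall j, eps <= G (K + j)%N) ->
  forall j, N (K + j)%N / G (K + j)%N ^+ 2 <= (N K / G K ^+ 2 + C / eps) * j.+1%:R.
Proof.
move=> eps_gt0 G_ge j.
pose u i := N (K + i)%N / G (K + i)%N ^+ 2.
have u_incr i : u i.+1 <= u i + C / eps.
  rewrite /u addnS (le_trans (direction_ratio_step _)) // lerD2l.
  by apply: ler_wpM2l; rewrite ?C_ge0 // lef_pV2 ?posrE ?G_gt0 // -addnS.
have := bounded_increments_le_affine _ _ u_incr j; rewrite /u addn0 -[j.+1]addn1 natrD.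
have := mulr_ge0 (ltW (direction_ratio_gt0 K)) (ler0n R j).
have := divr_ge0 C_ge0 (ltW eps_gt0); nra.
Qed.

(* Away from stationarity [N_k / G_k^2] grows at most linearly, so the
   Zoutendijk terms dominate a harmonic series. *)
Lemma zoutendijk_terms_harmonic K eps : 0 < eps -> (forall j, eps <= G (K + j)%N) ->
  exists2 c, 0 < c & forall j, c * harmonic j <= kappa * (P (K + j)%N ^+ 2 / N (K + j)%N).
Proof.
move=> eps_gt0 G_ge.
have := c2_lt_half => c2_lt.
set A := N K / G K ^+ 2 + C / eps.
have A_gt0 : 0 < A.
  by rewrite ltr_wpDr ?direction_ratio_gt0 // divr_ge0 ?C_ge0 // ltW.
have kappa_gt0 : 0 < kappa by rewrite !mulr_gt0 ?invr_gt0 //; lra.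
have delta_gt0 : 0 < delta by rewrite divr_gt0; lra.
exists (kappa * delta ^+ 2 / A) => [|j]; first by rewrite divr_gt0 // mulr_gt0 // exprn_gt0.
have -> : kappa * delta ^+ 2 / A * harmonic j = kappa * (delta ^+ 2 / (A * j.+1%:R)).
  by rewrite /= invfM !mulrA.
apply: ler_wpM2l; first exact: ltW.
apply: (@le_trans _ _ (delta ^+ 2 / (N (K + j)%N / G (K + j)%N ^+ 2))).
  apply: ler_wpM2l; first exact: sqr_ge0.
  have Aj_gt0 : 0 < A * j.+1%:R by rewrite mulr_gt0 // ltr0Sn.
  by rewrite lef_pV2 ?posrE ?direction_ratio_gt0 // direction_ratio_linear.
rewrite invf_div mulrA; apply: ler_wpM2r; last exact: slope_sqr_ge.
by rewrite invr_ge0 ltW // dir_sqr_gt0.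
Qed.

Lemma gradient_frequently_small b : (forall x, b <= f x) ->
  forall e, 0 < e -> forall K, exists2 k, (K <= k)%N & tn (X k) (grad (X k)) <= e.
Proof.
move=> f_ge e e_gt0 K; apply: contrapT => never_small.
have G_ge j : e ^+ 2 <= G (K + j)%N.
  rewrite /G -sqr_tnorm ler_pXn2r ?nnegrE ?tnorm_ge0 ?(ltW e_gt0) // leNgt.
  apply/negP => lt_e; apply: never_small; exists (K + j)%N; [exact: leq_addr | exact: ltW].
have [c c_gt0 c_le] := zoutendijk_terms_harmonic _ _ (exprn_gt0 2 e_gt0) G_ge.
have [n lt_sum] := harmonic_minorant_sum_unbounded _ _ c_gt0 c_le (f (X K) - b).
by have := zoutendijk_sum K n; have := f_ge (X (K + n)%N); lra.
Qed.

End Nonstationary.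

End RiemannianRetraction.

Theorem mainTheorem4 (R : realType) (M : Type) (T : M -> lmodType R)
  (g : forall x, T x -> T x -> R) (Rt : forall x, T x -> M)
  (DR : forall x (eta : T x), T x -> T (Rt x eta))
  (f : M -> R) (grad : forall x, T x)
  (Hmetric : is_metric R M T g) (Hretr : is_retraction R M T Rt DR)
  (Hgrad : grad_chain_rule R M T g Rt DR f grad)
  (Hbdd : exists b : R, forall x, b <= f x)
  (L : R) (HL : 0 < L)
  (HLip : forall x (eta : T x), tnorm R M T g x eta = 1 -> forall t : R, 0 <= t ->
     `| DfR R M T Rt f x (t *: eta) eta - DfR R M T Rt f x 0 eta | <= L * t)
  (c1 c2 : R) (Hc : 0 < c1 /\ c1 < c2 /\ c2 < 1 / 2)
  (x0 : M) (s : nat -> {y : M & T y}) (alpha : nat -> R)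
  (Hs0 : s 0%N = existT (fun y => T y) x0 (- grad x0))
  (Hpos : forall k, 0 < alpha k)
  (Hwolfe : forall k, strong_wolfe R M T g Rt DR f grad c1 c2 (projT1 (s k)) (projT2 (s k)) (alpha k))
  (Hstep : forall k, s k.+1 = sfr_step R M T g Rt DR grad (projT1 (s k)) (projT2 (s k)) (alpha k)) :
  limn_einf (fun k => (tnorm R M T g (projT1 (s k)) (grad (projT1 (s k))))%:E) = 0%E.
Proof.
have [b f_ge] := Hbdd; have [c1_gt0 [c1_lt_c2 c2_lt_half]] := Hc.
have c2_ge0 : 0 <= c2 by lra.
apply: limn_einf_eq0 => [k|e e_gt0 K]; first exact: tnorm_ge0.
have [[k grad0]|nonstationary] := pselect (exists k, grad (projT1 (s k)) = 0).
  exists (K + k)%N; first exact: leq_addr.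
  rewrite addnC (stationary_forever Hmetric Hretr x0 s alpha Hs0 Hstep k grad0).
  by rewrite (tnorm0 Hmetric) ltW.
have Hnz k : grad (projT1 (s k)) != 0.
  by apply/eqP => grad0; apply: nonstationary; exists k.
exact: (gradient_frequently_small Hmetric Hretr Hgrad L HL HLip c1 c2 c1_gt0 c2_ge0
  c2_lt_half x0 s alpha Hs0 Hpos Hwolfe Hstep Hnz b f_ge e e_gt0 K).
Qed.
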